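(* Let $\bar A=\{A_i\}$ be a partition with $A_i\in(P_i,Q_i)$ for all $i$, and fix $j$. (i) If $x\in[A_j,Q_j)$ and $T_{j-1}(x)\in(P_{\theta(j-1)},A_{\theta(j-1)}]$, then $T_{\theta(j-1)-1}T_{j-1}(x)\in(x,P_{j+1})$. (ii) If $x\in(P_j,A_j]$ and $T_j(x)\in[A_{\rho(j)+1},Q_{\rho(j)+1})$, then $T_{\rho(j)+1}T_j(x)\in(Q_{j-1},x)$.
   Context: Setting. Fix $g\ge 2$; indices are mod $8g-4$. Let $\mathcal F$ be the regular hyperbolic $(8g-4)$-gon in the unit disk centered at $0$ with all interior angles $\pi/2$, sides labeled $1,\dots,8g-4$ counterclockwise, side $i$ joining vertices $V_i$ and $V_{i+1}$. The complete geodesic extending side $i$ goes from $P_i$ (beyond $V_i$) to $Q_{i+1}$ (beyond $V_{i+1}$) on the unit circle; counterclockwise order $P_1,Q_1,P_2,Q_2,\dots,P_{8g-4},Q_{8g-4}$. $\sigma(i)=4g-i$ ($i$ odd), $\sigma(i)=2-i$ ($i$ even), $\rho(i)=\sigma(i)+1$, $\theta(i)=\sigma(i)-1$. $T_i$ is the Möbius transformation mapping side $i$ onto side $\sigma(i)$, with isometric circle the geodesic $P_iQ_{i+1}$, mapped onto the geodesic $Q_{\sigma(i)+1}P_{\sigma(i)}$, inside to outside. Arcs $[A,B)$, $(A,B]$, $(A,B)$ are counterclockwise from $A$ to $B$. *)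

From Stdlib Require Import Reals ZArith.
From Coquelicot Require Import Coquelicot.
Open Scope R_scope.

(** Number of sides N = 8g - 4. Indices are integers, read mod N. *)
Definition NN (g : Z) : Z := (8 * g - 4)%Z.

(** sigma, rho, theta (defined on all integers; parity is well defined mod N
    since N is even, and all formulas are compatible with reduction mod N). *)
Definition sigma (g i : Z) : Z := if Z.odd i then (4 * g - i)%Z else (2 - i)%Z.
Definition rho (g i : Z) : Z := (sigma g i + 1)%Z.
Definition theta (g i : Z) : Z := (sigma g i - 1)%Z.

Definition expi (a : R) : Complex.C := (cos a, sin a).

Definition ccw (a b : R) : R :=
  (b - a) - 2 * PI * IZR (Int_part ((b - a) / (2 * PI))).

Definition arc_oo (a b : R) (z : Complex.C) : Prop :=
  exists s, 0 < s /\ s < ccw a b /\ z = expi (a + s).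
Definition arc_co (a b : R) (z : Complex.C) : Prop :=
  exists s, 0 <= s /\ s < ccw a b /\ z = expi (a + s).
Definition arc_oc (a b : R) (z : Complex.C) : Prop :=
  exists s, 0 < s /\ s <= ccw a b /\ z = expi (a + s).

(** Geometry of the regular N-gon with interior angles pi/2 centered at 0,
    rotated by an arbitrary angle [rot].  The geodesic extending side i is
    symmetric about the direction phi_i = rot + 2 pi i / N and has endpoints
    e^{i(phi_i - alpha)} = P_i and e^{i(phi_i + alpha)} = Q_{i+1}, where the
    half-aperture alpha in (0, pi/2) is determined by orthogonality of
    adjacent geodesics: cos^2 alpha = cos(2 pi / N). *)
Definition phi (rot : R) (g i : Z) : R := rot + 2 * PI * IZR i / IZR (NN g).
Definition alpha (g : Z) : R := atan (sqrt (/ cos (2 * PI / IZR (NN g)) - 1)).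
Definition Pang (rot : R) (g i : Z) : R := phi rot g i - alpha g.
Definition Qang (rot : R) (g i : Z) : R := phi rot g (i - 1) + alpha g.

(** The geodesic with endpoints e^{-i alpha}, e^{i alpha} meets the real axis
    at tpt = sec alpha - tan alpha.  [halfturn] is the hyperbolic rotation by
    pi about tpt (m_t is the involutive disk automorphism swapping 0 and t). *)
Definition tpt (g : Z) : R := (1 - sin (alpha g)) / cos (alpha g).
Definition mob_t (t : R) (z : Complex.C) : Complex.C :=
  Cdiv (Cminus (RtoC t) z) (Cminus (RtoC 1) (Cmult (RtoC t) z)).
Definition halfturn (t : R) (z : Complex.C) : Complex.C :=
  mob_t t (Copp (mob_t t z)).

(** T_i: the orientation-preserving Moebius transformation of the disk mapping
    side i onto side sigma(i), with P_i |-> Q_{sigma(i)+1},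
    Q_{i+1} |-> P_{sigma(i)}, inside of the isometric circle P_i Q_{i+1} to
    the outside of Q_{sigma(i)+1} P_{sigma(i)}. *)
Definition Tmap (rot : R) (g i : Z) (z : Complex.C) : Complex.C :=
  Cmult (expi (phi rot g (sigma g i)))
        (halfturn (tpt g) (Cmult (expi (- phi rot g i)) z)).

(* Everything is read in angle coordinates on the unit circle.  With h = 2 pi / N
   and the half-aperture alpha (cos^2 alpha = cos h), the arc (P_i, Q_i) is the
   window (-alpha, alpha - h) around phi_i = rot + i h, and each arc in the
   hypotheses lies in such a window because A_i does.  On the circle, T_i is
   theta |-> phi_sigma(i) + G (theta - phi_i), where
   G theta = pi + 2 atan (K tan (theta / 2)), K = (1 + cos alpha) / (1 - cos alpha),
   is the angular form of the Moebius involution m_(cos alpha), to which the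
   half-turn about sec alpha - tan alpha reduces.  The lemma then follows from
   G theta > theta + 2 pi - 2 h on (h - alpha, alpha) and its mirror image
   G theta < theta + 2 h on (-alpha, alpha - h), each used twice, together with
   G alpha = 2 pi - alpha and sigma (sigma k + 2 n) = k - 2 n. *)

From Pilot Require Import Defs.
From Stdlib Require Import Reals ZArith Lra Lia.
From Coquelicot Require Import Coquelicot.
Open Scope R_scope.

Lemma expi_add (a b : R) : Cmult (expi a) (expi b) = expi (a + b).
Proof. unfold expi, Cmult; simpl. rewrite cos_plus, sin_plus. f_equal; ring. Qed.

Lemma expi_2PI_mult (a : R) (m : Z) : expi (a + 2 * PI * IZR m) = expi a.
Proof.
  unfold expi. rewrite cos_plus, sin_plus.
  assert (Hk : sin (2 * PI * IZR m) = 0 /\ cos (2 * PI * IZR m) = 1).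
  { replace (2 * PI * IZR m) with (2 * (IZR m * PI)) by ring.
    rewrite sin_2a, cos_2a_sin, sin_eq_0_1 by (now exists m). split; ring. }
  destruct Hk as [-> ->]. f_equal; ring.
Qed.

Lemma expi_eq_mod (a b : R) : expi a = expi b -> exists m : Z, b = a + 2 * PI * IZR m.
Proof.
  unfold expi. intros E. injection E as Ec Es.
  assert (Hcos : cos (2 * ((b - a) / 2)) = 1).
  { replace (2 * ((b - a) / 2)) with (b - a) by field.
    rewrite cos_minus, <- Ec, <- Es. pose proof (sin2_cos2 a). unfold Rsqr in *. lra. }
  rewrite cos_2a_sin in Hcos.
  destruct (sin_eq_0_0 ((b - a) / 2)) as [m Hm]; [nra|].
  exists m. lra.
Qed.

Lemma IZR_close_eq (m k : Z) : -1 < IZR m - IZR k < 1 -> m = k.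
Proof.
  rewrite <- minus_IZR. intros [H1 H2]. apply lt_IZR in H1. apply lt_IZR in H2. lia.
Qed.

Lemma ccw_range (a b : R) : 0 <= ccw a b < 2 * PI.
Proof.
  unfold ccw. pose proof PI_RGT_0.
  set (r := (b - a) / (2 * PI)).
  replace (b - a) with (2 * PI * r) by (unfold r; field; lra).
  destruct (base_Int_part r). nra.
Qed.

Lemma ccw_mod (a b : R) : exists m : Z, b - a = ccw a b + 2 * PI * IZR m.
Proof. exists (Int_part ((b - a) / (2 * PI))). unfold ccw. ring. Qed.

Lemma ccw_eq (a b v : R) (m : Z) :
  0 <= v < 2 * PI -> b - a = v + 2 * PI * IZR m -> ccw a b = v.
Proof.
  intros Hv E. destruct (ccw_mod a b) as [k Hk]. pose proof (ccw_range a b).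
  pose proof PI_RGT_0.
  assert (m = k) as -> by (apply IZR_close_eq; nra).
  lra.
Qed.

Lemma ccw_expi (a a' b b' : R) :
  expi a = expi a' -> expi b = expi b' -> ccw a b = ccw a' b'.
Proof.
  intros Ea Eb. destruct (expi_eq_mod _ _ Ea) as [ma ->].
  destruct (expi_eq_mod _ _ Eb) as [mb ->]. destruct (ccw_mod a b) as [k Hk].
  symmetry. apply (ccw_eq _ _ _ (k + mb - ma)); [apply ccw_range|].
  rewrite !minus_IZR, plus_IZR. lra.
Qed.

Lemma arc_oo_expi (a a' b b' : R) (z : C) :
  expi a = expi a' -> expi b = expi b' -> arc_oo a' b' z -> arc_oo a b z.
Proof.
  intros Ea Eb (s & Hs0 & Hs1 & ->). exists s.
  rewrite (ccw_expi a a' b b') by assumption.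
  rewrite <- !expi_add, Ea. auto.
Qed.

Lemma arc_oo_iff (a b y : R) :
  a <= b < a + 2 * PI ->
  arc_oo a b (expi y) <-> exists m : Z, a < y + 2 * PI * IZR m < b.
Proof.
  intros Hab. unfold arc_oo. rewrite (ccw_eq a b (b - a) 0) by (simpl; lra). split.
  - intros (s & Hs0 & Hs1 & E). destruct (expi_eq_mod _ _ E) as [m Hm].
    exists m. lra.
  - intros [m Hm]. exists (y + 2 * PI * IZR m - a). split; [lra|split; [lra|]].
    rewrite <- (expi_2PI_mult y m). f_equal. ring.
Qed.

Lemma arc_oo_window (a b c y : R) :
  c < a -> a <= b -> b < c + 2 * PI -> c < y < c + 2 * PI ->
  arc_oo a b (expi y) -> a < y < b.
Proof.
  intros Hca Hab Hbc Hy Harc. pose proof PI_RGT_0.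
  apply arc_oo_iff in Harc as [m Hm]; [|lra].
  assert (m = 0%Z) as -> by (apply IZR_close_eq; simpl; nra).
  simpl in Hm. lra.
Qed.

Lemma arc_co_sub_oo (p q a : R) (z : C) :
  arc_oo p q (expi a) -> arc_co a q z -> arc_oo p q z.
Proof.
  intros (s0 & Hs0 & Hs0q & Ea) (s & Hs & Hsq & ->).
  destruct (expi_eq_mod _ _ Ea) as [m Hm]. destruct (ccw_mod p q) as [k Hk].
  rewrite (ccw_eq a q (ccw p q - s0) (k + m)) in Hsq.
  - exists (s0 + s). split; [lra|split; [lra|]].
    rewrite <- expi_add, Ea, expi_add. f_equal. ring.
  - pose proof (ccw_range p q). lra.
  - rewrite plus_IZR. lra.
Qed.

Lemma arc_oc_sub_oo (p q a : R) (z : C) :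
  arc_oo p q (expi a) -> arc_oc p a z -> arc_oo p q z.
Proof.
  intros (s0 & Hs0 & Hs0q & Ea) (s & Hs & Hsa & ->).
  destruct (expi_eq_mod _ _ Ea) as [m Hm]. pose proof (ccw_range p q).
  rewrite (ccw_eq p a s0 (- m)) in Hsa by (try lra; rewrite opp_IZR; lra).
  exists s. split; [lra|split; [lra|reflexivity]].
Qed.

Lemma one_sub_mul_expi_neq0 (r th : R) :
  -1 < r < 1 -> Cminus (RtoC 1) (Cmult (RtoC r) (expi th)) <> RtoC 0.
Proof.
  intros Hr E. unfold expi, Cminus, Cmult, RtoC, Cplus, Copp in E; simpl in E.
  injection E as E1 E2. pose proof (sin2_cos2 th). unfold Rsqr in *. nra.
Qed.

Lemma halfturn_expi (t th : R) :
  -1 < t < 1 -> halfturn t (expi th) = mob_t (2 * t / (1 + t * t)) (expi th).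
Proof.
  intros Ht. set (c := 2 * t / (1 + t * t)).
  assert (Hc : -1 < c < 1).
  { assert (E : c * (1 + t * t) = 2 * t) by (unfold c; field; nra). nra. }
  assert (Hz1 := one_sub_mul_expi_neq0 t th Ht).
  assert (Hzc := one_sub_mul_expi_neq0 c th Hc).
  assert (Ec : RtoC c = Cdiv (Cmult (RtoC 2) (RtoC t)) (Cplus (RtoC 1) (Cmult (RtoC t) (RtoC t)))).
  { unfold c, RtoC, Cdiv, Cmult, Cplus, Cinv; simpl. f_equal; field; nra. }
  unfold halfturn, mob_t. rewrite Ec in *. set (z := expi th) in *.
  assert (Ht2 : Cplus (RtoC 1) (Cmult (RtoC t) (RtoC t)) <> RtoC 0).
  { intro E. injection E as E1 E2. nra. }
  field. cbv beta. split; [exact Ht2|split; [|exact Hz1]].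
  intro E. apply Hzc.
  replace (1 - 2 * t / (1 + t * t) * z)%C with ((1 + t * t - 2 * t * z) / (1 + t * t))%C
    by (field; exact Ht2).
  rewrite E. field. exact Ht2.
Qed.

Lemma cos_acute_bounds (a : R) : 0 < a < PI / 2 -> 0 < cos a < 1.
Proof.
  intros Ha. pose proof PI_RGT_0.
  split; [apply cos_gt_0|rewrite <- cos_0; apply cos_decreasing_1]; lra.
Qed.

Lemma halfturn_tpt_expi (a th : R) :
  0 < a < PI / 2 -> halfturn ((1 - sin a) / cos a) (expi th) = mob_t (cos a) (expi th).
Proof.
  intros Ha. pose proof PI_RGT_0.
  pose proof (cos_acute_bounds a Ha) as Hc.
  assert (Hs : 0 < sin a < 1).
  { split; [apply sin_gt_0; lra|rewrite <- sin_PI2; apply sin_increasing_1; lra]. }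
  assert (Hsc : sin a * sin a + cos a * cos a = 1)
    by (pose proof (sin2_cos2 a); unfold Rsqr in *; lra).
  set (t := (1 - sin a) / cos a).
  assert (Ht : 0 < t < 1).
  { unfold t. split; [apply Rdiv_lt_0_compat; lra|].
    assert (1 - sin a < cos a) by (apply Rsqr_incrst_0; unfold Rsqr; nra).
    apply Rmult_lt_reg_r with (cos a); [lra|].
    unfold Rdiv. rewrite Rmult_assoc, Rinv_l, Rmult_1_r by lra. lra. }
  rewrite halfturn_expi by lra. do 2 f_equal.
  unfold t. field_simplify; [|lra..].
  replace (cos a ^ 2) with (1 - sin a ^ 2) by (simpl; lra). field. lra.
Qed.

(* In the half-angle coordinate u = tan (th / 2) of the unit circle, [mob_t c]
   is u |-> (1 + c) / (1 - c) * u followed by the antipodal map. *)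
Definition mob_angle (c th : R) : R := PI + 2 * atan ((1 + c) / (1 - c) * tan (th / 2)).

Lemma expi_2atan (u : R) :
  expi (2 * atan u) = ((1 - u * u) / (1 + u * u), 2 * u / (1 + u * u)).
Proof.
  unfold expi. rewrite cos_2a, sin_2a, cos_atan, sin_atan. unfold Rsqr.
  assert (Hu : 0 < 1 + u * u) by nra.
  pose proof (sqrt_lt_R0 _ Hu) as Hq. pose proof (sqrt_sqrt _ (Rlt_le _ _ Hu)) as Hqq.
  set (q := sqrt (1 + u * u)) in *. rewrite <- Hqq. f_equal; field; lra.
Qed.

Lemma mob_t_expi (c th : R) :
  -1 < c < 1 -> - PI < th < PI -> mob_t c (expi th) = expi (mob_angle c th).
Proof.
  intros Hc Hth. unfold mob_t, mob_angle.
  replace (expi th) with (expi (2 * atan (tan (th / 2))))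
    by (rewrite atan_tan by lra; f_equal; field).
  set (u := tan (th / 2)).
  assert (Hb := one_sub_mul_expi_neq0 c (2 * atan u) Hc).
  enough (E : Cminus (RtoC c) (expi (2 * atan u)) =
              Cmult (expi (PI + 2 * atan ((1 + c) / (1 - c) * u)))
                    (Cminus (RtoC 1) (Cmult (RtoC c) (expi (2 * atan u)))))
    by (rewrite E; field; exact Hb).
  rewrite <- expi_add, !expi_2atan.
  replace (expi PI) with (RtoC (-1)) by (unfold expi, RtoC; now rewrite cos_PI, sin_PI).
  assert (Hu : 0 < 1 + u * u) by nra.
  assert (0 < (1 - c) * (1 - c) + (1 + c) * u * ((1 + c) * u)).
  { pose proof (Rle_0_sqr ((1 + c) * u)). unfold Rsqr in *. nra. }
  unfold Cminus, Cmult, Cplus, Copp, RtoC; simpl.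
  f_equal; field; repeat split; lra.
Qed.

Lemma mob_angle_range (c th : R) : 0 < mob_angle c th < 2 * PI.
Proof.
  unfold mob_angle. pose proof (atan_bound ((1 + c) / (1 - c) * tan (th / 2))). lra.
Qed.

Lemma mob_angle_increasing (c a b : R) :
  -1 < c < 1 -> - PI < a -> a < b -> b < PI -> mob_angle c a < mob_angle c b.
Proof.
  intros Hc Ha Hab Hb. unfold mob_angle.
  assert (HK : 0 < (1 + c) / (1 - c)) by (apply Rdiv_lt_0_compat; lra).
  assert (tan (a / 2) < tan (b / 2)) by (apply tan_increasing; lra).
  assert (atan ((1 + c) / (1 - c) * tan (a / 2)) < atan ((1 + c) / (1 - c) * tan (b / 2)))
    by (apply atan_increasing, Rmult_lt_compat_l; assumption).
  lra.
Qed.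

Lemma mob_angle_opp (c th : R) : mob_angle c (- th) = 2 * PI - mob_angle c th.
Proof.
  unfold mob_angle. replace (- th / 2) with (- (th / 2)) by field.
  rewrite tan_neg, <- Ropp_mult_distr_r, atan_opp. ring.
Qed.

Lemma mob_angle_cos_fixed (a : R) : 0 < a < PI -> mob_angle (cos a) a = 2 * PI - a.
Proof.
  intros Ha.
  assert (Hcos : 0 < cos (a / 2)) by (apply cos_gt_0; lra).
  assert (Hsin : 0 < sin (a / 2)) by (apply sin_gt_0; lra).
  assert (Ec1 : cos a = 2 * cos (a / 2) * cos (a / 2) - 1)
    by (rewrite <- cos_2a_cos; f_equal; field).
  assert (Ec2 : cos a = 1 - 2 * sin (a / 2) * sin (a / 2))
    by (rewrite <- cos_2a_sin; f_equal; field).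
  assert (E : (1 + cos a) / (1 - cos a) * tan (a / 2) = / tan (a / 2)).
  { unfold tan. rewrite Ec1 at 1. rewrite Ec2. field. repeat split; nra. }
  unfold mob_angle. rewrite E, atan_inv by (unfold tan; apply Rdiv_lt_0_compat; lra).
  rewrite atan_tan by lra. field.
Qed.

Section PolygonAngles.

Variables al h : R.
Hypothesis Hal : 0 < al < PI / 2.
Hypothesis Hh : 0 < h < PI / 2.
Hypothesis Hcos : cos al * cos al = cos h.

Lemma al_lt_h : al < h.
Proof.
  pose proof PI_RGT_0. pose proof (cos_acute_bounds al Hal).
  apply cos_decreasing_0; nra.
Qed.

Lemma h_lt_2al : h < 2 * al.
Proof.
  pose proof PI_RGT_0.
  pose proof (cos_acute_bounds al Hal). pose proof (cos_acute_bounds (h / 2) ltac:(lra)).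
  assert (E : cos h = 2 * cos (h / 2) * cos (h / 2) - 1)
    by (rewrite <- cos_2a_cos; f_equal; field).
  enough (h / 2 < al) by lra.
  apply cos_decreasing_0; nra.
Qed.

(* With x = th / 2 and y = h - x the claim is K tan x > cot y, i.e.
   c cos (x - y) > cos (x + y) = cos h = c^2 for c = cos al. *)
Lemma mob_angle_lower (th : R) :
  h - al < th < al -> th + 2 * PI - 2 * h < mob_angle (cos al) th.
Proof.
  intros Hth. pose proof al_lt_h. pose proof PI_RGT_0.
  pose proof (cos_acute_bounds al Hal) as Hc. set (c := cos al) in *.
  set (x := th / 2). set (y := h - x).
  assert (Hcx : 0 < cos x) by (apply cos_gt_0; unfold x; lra).
  assert (Hsx : 0 < sin x) by (apply sin_gt_0; unfold x; lra).
  assert (Hcy : 0 < cos y) by (apply cos_gt_0; unfold y, x; lra).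
  assert (Hsy : 0 < sin y) by (apply sin_gt_0; unfold y, x; lra).
  assert (Hdiff : c < cos (x - y)).
  { replace (x - y) with (- (h - th)) by (unfold y, x; field).
    rewrite cos_neg. apply cos_decreasing_1; lra. }
  assert (Hsum : cos (x + y) = c * c) by (rewrite Hcos; f_equal; unfold y; ring).
  rewrite cos_minus in Hdiff. rewrite cos_plus in Hsum.
  assert (Htan : tan (PI / 2 - y) < (1 + c) / (1 - c) * tan x).
  { unfold tan. rewrite sin_shift, cos_shift. apply Rlt_0_minus.
    replace ((1 + c) / (1 - c) * (sin x / cos x) - cos y / sin y)
      with (((1 + c) * sin x * sin y - (1 - c) * cos x * cos y) / ((1 - c) * cos x * sin y))
      by (field; repeat split; lra).
    apply Rdiv_lt_0_compat; [nra|].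
    apply Rmult_lt_0_compat; [apply Rmult_lt_0_compat|]; lra. }
  apply atan_increasing in Htan. rewrite atan_tan in Htan by (unfold y, x; lra).
  unfold mob_angle. unfold y, x in Htan. lra.
Qed.

Lemma mob_angle_upper (th : R) :
  - al < th < al - h -> mob_angle (cos al) th < th + 2 * h.
Proof.
  intros Hth. pose proof (mob_angle_lower (- th) ltac:(lra)) as Hlow.
  rewrite mob_angle_opp in Hlow. lra.
Qed.

Lemma mob_angle_comp_bounds_ccw (a th : R) :
  - al < a < al - h -> h - al < th < al ->
  th = mob_angle (cos al) (a + h) + 2 * h - 2 * PI ->
  a + 2 * PI - h < mob_angle (cos al) th < 2 * PI - al.
Proof.
  intros Ha Hth Eth. pose proof al_lt_h.
  pose proof (mob_angle_lower (a + h) ltac:(lra)). pose proof (mob_angle_lower th Hth).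
  split; [lra|].
  rewrite <- (mob_angle_cos_fixed al) by lra.
  pose proof (cos_acute_bounds al Hal). apply mob_angle_increasing; lra.
Qed.

Lemma mob_angle_comp_bounds_cw (a th : R) :
  - al < a < al - h -> - al < th < al - h ->
  th = mob_angle (cos al) a - 2 * h ->
  al < mob_angle (cos al) th < a + 2 * h.
Proof.
  intros Ha Hth Eth.
  pose proof (mob_angle_upper a Ha). pose proof (mob_angle_upper th Hth).
  split; [|lra].
  replace al with (mob_angle (cos al) (- al)) at 1
    by (rewrite mob_angle_opp, mob_angle_cos_fixed by lra; ring).
  pose proof (cos_acute_bounds al Hal). apply mob_angle_increasing; lra.
Qed.

End PolygonAngles.

Definition dphi (g : Z) : R := 2 * PI / IZR (NN g).

Lemma phi_eq (rot : R) (g i : Z) : phi rot g i = rot + IZR i * dphi g.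
Proof. unfold phi, dphi. unfold Rdiv. ring. Qed.

Section Polygon.

Variable g : Z.
Hypothesis Hg : (2 <= g)%Z.

Lemma dphi_bounds : 0 < dphi g < PI / 2.
Proof.
  pose proof PI_RGT_0. assert (HN : 4 < IZR (NN g)) by (unfold NN; apply IZR_lt; lia).
  unfold dphi. split; [apply Rdiv_lt_0_compat; lra|].
  apply Rmult_lt_reg_r with (IZR (NN g)); [lra|].
  unfold Rdiv. rewrite Rmult_assoc, Rinv_l by lra. nra.
Qed.

Lemma alpha_bounds : 0 < alpha g < PI / 2.
Proof.
  pose proof (cos_acute_bounds _ dphi_bounds) as Hc.
  assert (1 < / cos (dphi g)) by (rewrite <- Rinv_1; apply Rinv_lt_contravar; lra).
  unfold alpha. fold (dphi g). split.
  - rewrite <- atan_0. apply atan_increasing, sqrt_lt_R0. lra.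
  - pose proof (atan_bound (sqrt (/ cos (dphi g) - 1))). lra.
Qed.

Lemma cos_alpha_sqr : cos (alpha g) * cos (alpha g) = cos (dphi g).
Proof.
  pose proof (cos_acute_bounds _ dphi_bounds) as Hc.
  assert (1 < / cos (dphi g)) by (rewrite <- Rinv_1; apply Rinv_lt_contravar; lra).
  unfold alpha. fold (dphi g). rewrite cos_atan. unfold Rsqr.
  rewrite sqrt_sqrt by lra. replace (1 + (/ cos (dphi g) - 1)) with (/ cos (dphi g)) by ring.
  rewrite sqrt_inv. field_simplify; [|apply Rgt_not_eq, sqrt_lt_R0; lra].
  simpl. rewrite Rmult_1_r. apply sqrt_sqrt. lra.
Qed.

Lemma dphi_alpha_order : 0 < dphi g < 2 * alpha g /\ alpha g < dphi g < PI / 2.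
Proof.
  pose proof dphi_bounds. pose proof alpha_bounds. pose proof cos_alpha_sqr.
  pose proof (al_lt_h (alpha g) (dphi g)). pose proof (h_lt_2al (alpha g) (dphi g)).
  intuition.
Qed.

Lemma Tmap_expi (rot th : R) (i : Z) :
  - PI < th < PI ->
  Tmap rot g i (expi (phi rot g i + th)) =
  expi (phi rot g (Defs.sigma g i) + mob_angle (cos (alpha g)) th).
Proof.
  intros Hth. pose proof alpha_bounds. pose proof (cos_acute_bounds _ alpha_bounds).
  unfold Tmap, tpt. rewrite expi_add. replace (- phi rot g i + (phi rot g i + th)) with th by ring.
  rewrite halfturn_tpt_expi, mob_t_expi by (auto; lra). apply expi_add.
Qed.

End Polygon.

Lemma odd_sigma (g k : Z) : Z.odd (Defs.sigma g k) = Z.odd k.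
Proof.
  unfold Defs.sigma. destruct (Z.odd k) eqn:Hk; rewrite <- Hk.
  - replace (4 * g - k)%Z with (k + 2 * (2 * g - k))%Z by ring. apply Z.odd_add_mul_2.
  - replace (2 - k)%Z with (k + 2 * (1 - k))%Z by ring. apply Z.odd_add_mul_2.
Qed.

Lemma sigma_sigma_add_even (g k n : Z) :
  Defs.sigma g (Defs.sigma g k + 2 * n) = (k - 2 * n)%Z.
Proof.
  unfold Defs.sigma at 1. rewrite Z.odd_add_mul_2, odd_sigma.
  unfold Defs.sigma. destruct (Z.odd k); ring.
Qed.

Section TwoStepImages.

Variables (g : Z) (rot : R) (A : Z -> R).
Hypothesis Hg : (2 <= g)%Z.
Hypothesis HA : forall i : Z, arc_oo (Pang rot g i) (Qang rot g i) (expi (A i)).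

Lemma Pang_eq (i : Z) : Pang rot g i = rot + IZR i * dphi g - alpha g.
Proof. unfold Pang. rewrite phi_eq. ring. Qed.

Lemma Qang_eq (i : Z) : Qang rot g i = rot + IZR i * dphi g - dphi g + alpha g.
Proof. unfold Qang. rewrite phi_eq, minus_IZR. simpl. ring. Qed.

Lemma arc_PQ_angle (i : Z) (z : R) :
  arc_oo (Pang rot g i) (Qang rot g i) (expi z) ->
  exists a, - alpha g < a < alpha g - dphi g /\ expi z = expi (phi rot g i + a).
Proof.
  pose proof (dphi_alpha_order g Hg). pose proof PI_RGT_0.
  intros Hz. apply arc_oo_iff in Hz as [m Hm]; [|rewrite Pang_eq, Qang_eq; lra].
  exists (z + 2 * PI * IZR m - phi rot g i). rewrite Pang_eq, Qang_eq, phi_eq in *.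
  split; [lra|]. rewrite <- (expi_2PI_mult z m). f_equal. ring.
Qed.

Lemma Tmap_theta_Tmap_arc (j : Z) (x : R) :
  arc_co (A j) (Qang rot g j) (expi x) ->
  arc_oc (Pang rot g (theta g (j - 1))) (A (theta g (j - 1))) (Tmap rot g (j - 1) (expi x)) ->
  arc_oo x (Pang rot g (j + 1)) (Tmap rot g (theta g (j - 1) - 1) (Tmap rot g (j - 1) (expi x))).
Proof.
  intros Hx Hy. pose proof (dphi_alpha_order g Hg) as Hha. pose proof PI_RGT_0.
  apply (arc_co_sub_oo _ _ _ _ (HA j)), arc_PQ_angle in Hx as (a & Ha & Ex).
  assert (Ej : phi rot g j + a = phi rot g (j - 1) + (a + dphi g))
    by (rewrite !phi_eq, minus_IZR; simpl; ring).
  rewrite Ex, Ej, Tmap_expi in Hy |- * by (auto; lra).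
  unfold theta in Hy |- *. set (S := Defs.sigma g (j - 1)) in Hy |- *.
  set (G1 := mob_angle (cos (alpha g)) (a + dphi g)) in Hy |- *.
  apply (arc_oc_sub_oo _ _ _ _ (HA (S - 1))) in Hy.
  pose proof (mob_angle_range (cos (alpha g)) (a + dphi g)) as HG1. fold G1 in HG1.
  assert (HG1' : 2 * PI - dphi g - alpha g < G1 < 2 * PI - 2 * dphi g + alpha g).
  { replace (phi rot g S + G1) with (phi rot g S + G1 - 2 * PI + 2 * PI * IZR 1) in Hy
      by (simpl; ring).
    rewrite expi_2PI_mult in Hy.
    apply (arc_oo_window _ _ (phi rot g S - 2 * PI)) in Hy;
      rewrite ?Pang_eq, ?Qang_eq, ?phi_eq, ?minus_IZR in *; simpl in *; lra. }
  set (th2 := G1 + 2 * dphi g - 2 * PI).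
  assert (E2 : expi (phi rot g S + G1) = expi (phi rot g (S + 2 * -1) + th2)).
  { rewrite <- (expi_2PI_mult (phi rot g (S + 2 * -1) + th2) 1). f_equal.
    unfold th2. rewrite !phi_eq, plus_IZR. simpl. ring. }
  replace (S - 1 - 1)%Z with (S + 2 * -1)%Z by ring.
  rewrite E2, Tmap_expi by (auto; unfold th2; lra). unfold S. rewrite sigma_sigma_add_even.
  replace (j - 1 - 2 * -1)%Z with (j + 1)%Z by ring.
  destruct (mob_angle_comp_bounds_ccw (alpha g) (dphi g) ltac:(lra) ltac:(lra)
    (cos_alpha_sqr g Hg) a th2 Ha ltac:(unfold th2; lra) eq_refl).
  apply (arc_oo_expi _ (phi rot g j + a) _ (Pang rot g (j + 1))); [exact Ex|reflexivity|].
  apply arc_oo_iff; rewrite Pang_eq; [|exists (-1)%Z]; rewrite ?phi_eq, ?plus_IZR; simpl; lra.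
Qed.

Lemma Tmap_rho_Tmap_arc (j : Z) (x : R) :
  arc_oc (Pang rot g j) (A j) (expi x) ->
  arc_co (A (rho g j + 1)) (Qang rot g (rho g j + 1)) (Tmap rot g j (expi x)) ->
  arc_oo (Qang rot g (j - 1)) x (Tmap rot g (rho g j + 1) (Tmap rot g j (expi x))).
Proof.
  intros Hx Hy. pose proof (dphi_alpha_order g Hg) as Hha. pose proof PI_RGT_0.
  apply (arc_oc_sub_oo _ _ _ _ (HA j)), arc_PQ_angle in Hx as (a & Ha & Ex).
  rewrite Ex, Tmap_expi in Hy |- * by (auto; lra).
  unfold rho in Hy |- *. set (S := Defs.sigma g j) in Hy |- *.
  set (G1 := mob_angle (cos (alpha g)) a) in Hy |- *.
  apply (arc_co_sub_oo _ _ _ _ (HA (S + 1 + 1))) in Hy.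
  pose proof (mob_angle_range (cos (alpha g)) a) as HG1. fold G1 in HG1.
  assert (HG1' : 2 * dphi g - alpha g < G1 < dphi g + alpha g).
  { apply (arc_oo_window _ _ (phi rot g S)) in Hy;
      rewrite ?Pang_eq, ?Qang_eq, ?phi_eq, ?plus_IZR in *; simpl in *; lra. }
  set (th2 := G1 - 2 * dphi g).
  assert (E2 : expi (phi rot g S + G1) = expi (phi rot g (S + 2 * 1) + th2)).
  { f_equal. unfold th2. rewrite !phi_eq, plus_IZR. simpl. ring. }
  replace (S + 1 + 1)%Z with (S + 2 * 1)%Z by ring.
  rewrite E2, Tmap_expi by (auto; unfold th2; lra). unfold S. rewrite sigma_sigma_add_even.
  destruct (mob_angle_comp_bounds_cw (alpha g) (dphi g) ltac:(lra) ltac:(lra)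
    (cos_alpha_sqr g Hg) a th2 Ha ltac:(unfold th2; lra) eq_refl).
  apply (arc_oo_expi _ (Qang rot g (j - 1)) _ (phi rot g j + a)); [reflexivity|exact Ex|].
  apply arc_oo_iff; rewrite Qang_eq; [|exists 0%Z]; rewrite ?phi_eq, ?minus_IZR; simpl; lra.
Qed.

End TwoStepImages.

Theorem lemma3p6 (g : Z) (rot : R) (A : Z -> R) (j : Z) (x : R) :
  (2 <= g)%Z ->
  (forall i : Z, expi (A (i + NN g)%Z) = expi (A i)) ->
  (forall i : Z, arc_oo (Pang rot g i) (Qang rot g i) (expi (A i))) ->
  (arc_co (A j) (Qang rot g j) (expi x) ->
   arc_oc (Pang rot g (theta g (j - 1)%Z)%Z) (A (theta g (j - 1)%Z)%Z)
          (Tmap rot g (j - 1)%Z (expi x)) ->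
   arc_oo x (Pang rot g (j + 1)%Z)
          (Tmap rot g (theta g (j - 1)%Z - 1) (Tmap rot g (j - 1)%Z (expi x))))
  /\
  (arc_oc (Pang rot g j) (A j) (expi x) ->
   arc_co (A (rho g j + 1)%Z) (Qang rot g (rho g j + 1)%Z) (Tmap rot g j (expi x)) ->
   arc_oo (Qang rot g (j - 1)%Z) x
          (Tmap rot g (rho g j + 1)%Z (Tmap rot g j (expi x)))).
Proof.
  intros Hg _ HA. split.
  - apply Tmap_theta_Tmap_arc; assumption.
  - apply Tmap_rho_Tmap_arc; assumption.
Qed.
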